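(* Let $\Sigma_1\subseteq (N_1)_\mathbb{R}$ and $\Sigma_2\subseteq(N_2)_\mathbb{R}$ be Ehrhart fans. Then the product fan $\Sigma_1\times\Sigma_2$ in $(N_1\oplus N_2)_\mathbb{R}$ is Ehrhart, and its Ehrhart polynomial is given by \[ \chi_{\Sigma_1\times\Sigma_2}([f_1\times f_2])=\chi_{\Sigma_1}([f_1])\cdot\chi_{\Sigma_2}([f_2]) \] for $f_1\in\mathrm{PL}(\Sigma_1)$, $f_2\in\mathrm{PL}(\Sigma_2)$, where $(f_1\times f_2)(x_1,x_2)=f_1(x_1)+f_2(x_2)$.
   Context: A fan is unimodular if it contains the origin and for each cone the primitive ray generators $u_\rho$ extend to a $\mathbb{Z}$-basis of the lattice. For a lattice $N$ with dual $M=\mathrm{Hom}(N,\mathbb{Z})$ viewed as integral linear functions, $\mathrm{PL}(\Sigma)$ is the group of functions on $|\Sigma|$ agreeing on each cone with some element of $M$ (for unimodular $\Sigma$ every element of $\mathrm{PL}(\Sigma_1\times\Sigma_2)$ is of the form $f_1\times f_2$), $\underline{\mathrm{PL}}(\Sigma)$ its quotient by restrictions of elements of $M$, $\delta_\rho$ the Courant function ($1$ at $u_\rho$, $0$ at other ray generators), $\Sigma^\sigma$ the star fan (image in $N_\mathbb{R}/\mathrm{span}(\sigma)$, lattice $N/\mathrm{Span}_\mathbb{Z}(\sigma\cap N)$, of all faces of cones containing $\sigma$) and $[f]^\sigma$ the class of the function induced by $f-m$, $m\in M$ agreeing with $f$ on $\sigma$. A unimodular fan $\Sigma$ is Ehrhart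 (recursively on dimension) if (1) $\Sigma^\rho$ is Ehrhart for every ray $\rho$, and (2) there is $\chi_\Sigma:\underline{\mathrm{PL}}(\Sigma)\to\mathbb{Z}$ with $\chi_\Sigma(0)=1$ and $\chi_\Sigma([f])=\chi_\Sigma([f-\delta_\rho])+\chi_{\Sigma^\rho}([f]^\rho)$ for all $f\in\mathrm{PL}(\Sigma)$, $\rho\in\Sigma(1)$. Zero-dimensional fans are Ehrhart with $\chi=1$; such $\chi_\Sigma$ is unique (the Ehrhart polynomial). *)

From HB Require Import structures.
From mathcomp Require Import all_boot all_order all_algebra.
From mathcomp Require Import Rstruct.
Set Implicit Arguments. Unset Strict Implicit. Unset Printing Implicit Defensive.
Import Order.TTheory GRing.Theory Num.Theory.
Local Open Scope ring_scope.

Notation RR := Rdefinitions.R.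

(* The lattice N = Z^n is 'rV[int]_n, its dual M = Z^n acting by the dot
   product, and N_R = R^n is 'rV[RR]_n. *)
Definition toR n (v : 'rV[int]_n) : 'rV[RR]_n := map_mx (fun z : int => z%:~R) v.

Definition evalM n (m : 'rV[int]_n) (x : 'rV[RR]_n) : RR :=
  \sum_(k < n) (m 0 k)%:~R * x 0 k.

Definition pairM n (m v : 'rV[int]_n) : int := \sum_(k < n) m 0 k * v 0 k.

Section Fan.
(* A (simplicial) fan in Z^n: its rays are indexed by the finite type I, with
   primitive generators u : I -> Z^n; its cones are given by the sets of rays
   generating them, C : {set {set I}} (cone(sigma) = R_{>=0}-span of u_i, i in sigma). *)
Variables (n : nat) (I : finType) (u : I -> 'rV[int]_n) (C : {set {set I}}).

Definition inCone (s : {set I}) (x : 'rV[RR]_n) : Prop :=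
  exists a : I -> RR, (forall i, 0 <= a i) /\ x = \sum_(i in s) a i *: toR (u i).

Definition extends_to_basis (s : {set I}) : Prop :=
  exists B : 'M[int]_n, B \in unitmx /\ forall i, i \in s -> exists k, row k B = u i.

Definition UnimodularFan : Prop :=
  [/\ set0 \in C,
      (forall i, [set i] \in C) /\ injective u,     (* I indexes the rays  *)
      (forall s t : {set I}, s \in C -> t \subset s -> t \in C),
      (forall s t : {set I}, s \in C -> t \in C -> forall x,
          inCone s x -> inCone t x -> inCone (s :&: t) x)
    & (forall s : {set I}, s \in C -> extends_to_basis s)].

(* ---- The star fan Sigma^sigma, modelled inside N_R = R^n. ----
   N_R/span(sigma) and its lattice N/Span_Z(sigma /\ N) are modelled by their
   preimages: the cones of Sigma^sigma are the images of the cones t \in C with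
   sigma \subset t, the dual lattice of N/Span(sigma) is {m in M | m = 0 on sigma},
   and a function on |Sigma^sigma| is represented by its pullback, restricted to
   the union of the cones t \supseteq sigma (a function on t that is linear with
   a slope vanishing on sigma extends uniquely to t + span(sigma)). *)

Definition vanishes_on (sigma : {set I}) (m : 'rV[int]_n) : Prop :=
  forall i, i \in sigma -> pairM m (u i) = 0.

Definition PLstar (sigma : {set I}) (f : 'rV[RR]_n -> RR) : Prop :=
  forall t, t \in C -> sigma \subset t ->
    exists m : 'rV[int]_n, vanishes_on sigma m /\
      forall x, inCone t x -> f x = evalM m x.

Definition eqPLbar (sigma : {set I}) (f g : 'rV[RR]_n -> RR) : Prop :=
  exists m : 'rV[int]_n, vanishes_on sigma m /\
    forall t, t \in C -> sigma \subset t ->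
      forall x, inCone t x -> f x - g x = evalM m x.

Definition starRay (sigma : {set I}) (rho : I) : bool :=
  (rho \notin sigma) && (rho |: sigma \in C).

Definition Courant (sigma : {set I}) (rho : I) (delta : 'rV[RR]_n -> RR) : Prop :=
  [/\ PLstar sigma delta,
      delta (toR (u rho)) = 1
    & forall rho', starRay sigma rho' -> rho' != rho -> delta (toR (u rho')) = 0].

(* EhrPoly sigma chi : Sigma^sigma is Ehrhart and chi (a function on
   PL(Sigma^sigma), constant on classes, i.e. a function on the quotient
   underline{PL}(Sigma^sigma)) is its Ehrhart polynomial chi_{Sigma^sigma}.
   The star fan (Sigma^sigma)^rho of Sigma^sigma is Sigma^(rho |: sigma),
   and [f]^rho is the class of f - m with m in the dual lattice of
   N/Span(sigma) agreeing with f on the cone (rho |: sigma). *)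
Inductive EhrPoly (sigma : {set I}) (chi : ('rV[RR]_n -> RR) -> int) : Prop :=
  EhrPolyI (chis : I -> ('rV[RR]_n -> RR) -> int) of
    (forall rho, starRay sigma rho -> EhrPoly (rho |: sigma) (chis rho)) &
    (forall f g, PLstar sigma f -> PLstar sigma g -> eqPLbar sigma f g ->
        chi f = chi g) &
    chi (fun _ => 0) = 1 &
    (forall f rho delta m, PLstar sigma f -> starRay sigma rho ->
        Courant sigma rho delta ->
        vanishes_on sigma m ->
        (forall x, inCone (rho |: sigma) x -> f x = evalM m x) ->
        chi f = chi (fun x => f x - delta x) + chis rho (fun x => f x - evalM m x)).

Definition PL := PLstar set0.

Definition IsEhrhartPolynomial (chi : ('rV[RR]_n -> RR) -> int) : Prop :=
  UnimodularFan /\ EhrPoly set0 chi.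

Definition Ehrhart : Prop := exists chi, IsEhrhartPolynomial chi.

End Fan.

Definition prod_u n1 n2 (I1 I2 : finType) (u1 : I1 -> 'rV[int]_n1)
  (u2 : I2 -> 'rV[int]_n2) (i : I1 + I2) : 'rV[int]_(n1 + n2) :=
  match i with
  | inl i1 => row_mx (u1 i1) 0
  | inr i2 => row_mx 0 (u2 i2)
  end.

(* the cones of Sigma1 x Sigma2 are the sigma1 x sigma2 *)
Definition prod_C (I1 I2 : finType) (C1 : {set {set I1}}) (C2 : {set {set I2}})
  : {set {set I1 + I2}} :=
  [set s : {set I1 + I2} | (inl @^-1: s \in C1) && (inr @^-1: s \in C2)].

Definition prod_fun n1 n2 (f1 : 'rV[RR]_n1 -> RR) (f2 : 'rV[RR]_n2 -> RR)
  (x : 'rV[RR]_(n1 + n2)) : RR := f1 (lsubmx x) + f2 (rsubmx x).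

From mathcomp Require Import all_boot all_order all_algebra.
From mathcomp Require Import Rstruct.
From Stdlib Require Import FunctionalExtensionality.
Set Implicit Arguments. Unset Strict Implicit. Unset Printing Implicit Defensive.
Import Order.TTheory GRing.Theory Num.Theory.
Local Open Scope ring_scope.

(* The Ehrhart polynomial of the product is chi f := chi1 (f|N1) * chi2 (f|N2),
   where f|Ni restricts f to the factor (N1 (+) 0 or 0 (+) N2); for
   f = f1 x f2 this is chi1 f1 * chi2 f2 because PL functions vanish at 0.
   Cones and star fans of the product are products, and every ray of the
   product comes from one factor.  For a ray inl r the product Courant function
   restricts to the Courant function of r on N1 and to 0 on the star fan of the
   second factor, so the recursion for chi is the recursion for chi1 multiplied
   by an unchanged factor chi2. *)

Section Pairing.
Variable n : nat.
Implicit Types (m v : 'rV[int]_n) (x y : 'rV[RR]_n).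

Lemma evalM_toR m v : evalM m (toR v) = (pairM m v)%:~R.
Proof.
rewrite /evalM /pairM rmorph_sum /=; apply: eq_bigr => k _.
by rewrite /toR mxE intrM.
Qed.

Lemma evalMD m x y : evalM m (x + y) = evalM m x + evalM m y.
Proof. by rewrite /evalM -big_split; apply: eq_bigr => k _; rewrite mxE mulrDr. Qed.

Lemma evalMZ m a x : evalM m (a *: x) = a * evalM m x.
Proof. by rewrite /evalM mulr_sumr; apply: eq_bigr => k _; rewrite mxE mulrCA. Qed.

Lemma evalMx0 m : evalM m 0 = 0.
Proof. by rewrite /evalM big1 // => k _; rewrite mxE mulr0. Qed.

Lemma evalM0 x : evalM 0 x = 0.
Proof. by rewrite /evalM big1 // => k _; rewrite mxE mul0r. Qed.

Lemma evalMBl m1 m2 x : evalM (m1 - m2) x = evalM m1 x - evalM m2 x.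
Proof. by rewrite /evalM -sumrB; apply: eq_bigr => k _; rewrite !mxE intrB mulrBl. Qed.

Lemma evalM_sum (J : finType) m (A : {pred J}) (a : J -> RR) (X : J -> 'rV_n) :
  evalM m (\sum_(j in A) a j *: X j) = \sum_(j in A) a j * evalM m (X j).
Proof.
elim/big_rec2: _ => [|j y z _ IH]; first exact: evalMx0.
by rewrite evalMD evalMZ IH.
Qed.

Lemma pairM0 v : pairM 0 v = 0.
Proof. by rewrite /pairM big1 // => k _; rewrite mxE mul0r. Qed.

Lemma pairMx0 m : pairM m 0 = 0.
Proof. by rewrite /pairM big1 // => k _; rewrite mxE mulr0. Qed.

Lemma pairMBl m1 m2 v : pairM (m1 - m2) v = pairM m1 v - pairM m2 v.
Proof. by rewrite /pairM -sumrB; apply: eq_bigr => k _; rewrite !mxE mulrBl. Qed.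

Lemma toR0 : toR (0 : 'rV[int]_n) = 0.
Proof. by apply/matrixP => i j; rewrite !mxE. Qed.

End Pairing.

Section BlockPairing.
Variables n1 n2 : nat.
Implicit Type m : 'rV[int]_(n1 + n2).

Lemma toR_row_mx (v1 : 'rV[int]_n1) (v2 : 'rV[int]_n2) :
  toR (row_mx v1 v2) = row_mx (toR v1) (toR v2).
Proof. exact: map_row_mx. Qed.

Lemma evalM_row_mx m x1 x2 :
  evalM m (row_mx x1 x2) = evalM (lsubmx m) x1 + evalM (rsubmx m) x2.
Proof.
by rewrite /evalM big_split_ord; congr (_ + _); apply: eq_bigr => k _;
  rewrite ?row_mxEl ?row_mxEr !mxE.
Qed.

Lemma pairM_row_mx m v1 v2 :
  pairM m (row_mx v1 v2) = pairM (lsubmx m) v1 + pairM (rsubmx m) v2.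
Proof.
by rewrite /pairM big_split_ord; congr (_ + _); apply: eq_bigr => k _;
  rewrite ?row_mxEl ?row_mxEr !mxE.
Qed.

Lemma evalM_row_mx0 m x : evalM m (row_mx x 0) = evalM (lsubmx m) x.
Proof. by rewrite evalM_row_mx evalMx0 addr0. Qed.

Lemma evalM_row_0mx m x : evalM m (row_mx 0 x) = evalM (rsubmx m) x.
Proof. by rewrite evalM_row_mx evalMx0 add0r. Qed.

Lemma pairM_row_mx0 m v : pairM m (row_mx v 0) = pairM (lsubmx m) v.
Proof. by rewrite pairM_row_mx pairMx0 addr0. Qed.

Lemma pairM_row_0mx m v : pairM m (row_mx 0 v) = pairM (rsubmx m) v.
Proof. by rewrite pairM_row_mx pairMx0 add0r. Qed.

End BlockPairing.

Lemma sum_row_mx (V : nmodType) (J : Type) (r : seq J) (P : pred J) m k1 k2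
    (F : J -> 'M[V]_(m, k1)) (G : J -> 'M[V]_(m, k2)) :
  \sum_(j <- r | P j) row_mx (F j) (G j) =
  row_mx (\sum_(j <- r | P j) F j) (\sum_(j <- r | P j) G j).
Proof.
elim/big_rec3: _ => [|j a b c _ ->]; first by rewrite row_mx0.
by rewrite add_row_mx.
Qed.

Section FanFacts.
Variables (n : nat) (I : finType) (u : I -> 'rV[int]_n) (C : {set {set I}}).

Lemma PLstarB s f g : PLstar u C s f -> PLstar u C s g ->
  PLstar u C s (fun x => f x - g x).
Proof.
move=> Hf Hg t tC st; have [m1 [v1 e1]] := Hf t tC st.
have [m2 [v2 e2]] := Hg t tC st; exists (m1 - m2); split.
  by move=> i is_; rewrite pairMBl v1 // v2 // subr0.
by move=> x cx; rewrite evalMBl e1 // e2.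
Qed.

Lemma PLstar_evalM s m : vanishes_on u s m -> PLstar u C s (evalM m).
Proof. by move=> v t _ _; exists m. Qed.

Lemma inCone_gen (t : {set I}) i : i \in t -> inCone u t (toR (u i)).
Proof.
move=> it; exists (fun j => (j == i)%:R); split=> [j|]; first exact: ler0n.
rewrite (bigD1 i) //= eqxx scale1r big1 ?addr0 // => j /andP [_ /negbTE ->].
by rewrite scale0r.
Qed.

Lemma PL_eval0 f : set0 \in C -> PL u C f -> f 0 = 0.
Proof.
move=> C0 Hf; have [m [_ ->]] := Hf set0 C0 (sub0set _); first exact: evalMx0.
by exists (fun _ => 0); split=> //; rewrite big1 // => j _; rewrite scale0r.
Qed.

Lemma unimodular_ray_neq0 i : UnimodularFan u C -> u i != 0.
Proof.
case=> _ [rays _] _ _ bases; have [B [Bu HB]] := bases _ (rays i).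
have [k <-] := HB i (set11 i); apply/eqP => Bk0.
have /(congr1 (row k))/matrixP/(_ 0 k) := mulmxV Bu.
by rewrite row_mul Bk0 mul0mx !mxE eqxx => /eqP; rewrite eq_sym oner_eq0.
Qed.

End FanFacts.

Section ProductSets.
Variables I1 I2 : finType.

Definition prod_set (s1 : {set I1}) (s2 : {set I2}) : {set I1 + I2} :=
  inl @: s1 :|: inr @: s2.

Lemma prod_set_inl r s1 s2 : (inl r \in prod_set s1 s2) = (r \in s1).
Proof.
rewrite !inE; apply/orP/idP => [[/imsetP[_ ? [->]] | /imsetP[]] // | ?].
by left; apply: imset_f.
Qed.

Lemma prod_set_inr r s1 s2 : (inr r \in prod_set s1 s2) = (r \in s2).
Proof.
rewrite !inE; apply/orP/idP => [[/imsetP[] | /imsetP[_ ? [->]]] // | ?].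
by right; apply: imset_f.
Qed.

Definition in_prod_set := (prod_set_inl, prod_set_inr).

Lemma preim_inl_prod_set s1 s2 : inl @^-1: prod_set s1 s2 = s1.
Proof. by apply/setP => x; rewrite inE prod_set_inl. Qed.

Lemma preim_inr_prod_set s1 s2 : inr @^-1: prod_set s1 s2 = s2.
Proof. by apply/setP => x; rewrite inE prod_set_inr. Qed.

Lemma prod_set0 : prod_set set0 set0 = set0.
Proof. by apply/setP => [[x|x]]; rewrite in_prod_set !inE. Qed.

Lemma prod_set1l r : [set inl r] = prod_set [set r] set0.
Proof. by apply/setP => [[x|x]]; rewrite in_prod_set !inE. Qed.

Lemma prod_set1r r : [set inr r] = prod_set set0 [set r].
Proof. by apply/setP => [[x|x]]; rewrite in_prod_set !inE. Qed.

Lemma setU1_prod_set_inl r s1 s2 : inl r |: prod_set s1 s2 = prod_set (r |: s1) s2.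
Proof. by apply/setP => [[x|x]]; rewrite !(in_setU1, in_prod_set). Qed.

Lemma setU1_prod_set_inr r s1 s2 : inr r |: prod_set s1 s2 = prod_set s1 (r |: s2).
Proof. by apply/setP => [[x|x]]; rewrite !(in_setU1, in_prod_set). Qed.

Lemma prod_setS (s1 t1 : {set I1}) (s2 t2 : {set I2}) : s1 \subset t1 -> s2 \subset t2 ->
  prod_set s1 s2 \subset prod_set t1 t2.
Proof.
move=> /subsetP st1 /subsetP st2.
by apply/subsetP => [[x|x]]; rewrite !in_prod_set; [apply: st1 | apply: st2].
Qed.

Lemma prod_set_prod_C (C1 : {set {set I1}}) (C2 : {set {set I2}}) s1 s2 :
  (prod_set s1 s2 \in prod_C C1 C2) = (s1 \in C1) && (s2 \in C2).
Proof. by rewrite inE preim_inl_prod_set preim_inr_prod_set. Qed.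

End ProductSets.

Section ProductFan.
Variables (n1 n2 : nat) (I1 I2 : finType)
  (u1 : I1 -> 'rV[int]_n1) (C1 : {set {set I1}})
  (u2 : I2 -> 'rV[int]_n2) (C2 : {set {set I2}}).

Local Notation u := (prod_u u1 u2).
Local Notation C := (prod_C C1 C2).

Lemma prod_u_combination (a : I1 + I2 -> RR) (s : {set I1 + I2}) :
  \sum_(i in s) a i *: toR (u i) =
  row_mx (\sum_(j in inl @^-1: s) a (inl j) *: toR (u1 j))
         (\sum_(j in inr @^-1: s) a (inr j) *: toR (u2 j)).
Proof.
rewrite big_sumType /=.
under eq_bigr do rewrite toR_row_mx toR0 scale_row_mx scaler0.
under [X in _ + X]eq_bigr do rewrite toR_row_mx toR0 scale_row_mx scaler0.
rewrite !sum_row_mx add_row_mx !big1_eq addr0 add0r.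
by congr row_mx; apply: eq_bigl => j; rewrite inE.
Qed.

Lemma inCone_prod_l t1 t2 x :
  inCone u1 t1 x -> inCone u (prod_set t1 t2) (row_mx x 0).
Proof.
move=> [a [a0 ->]]; exists (fun i => if i is inl j then a j else 0).
split=> [[]|] //; rewrite prod_u_combination preim_inl_prod_set preim_inr_prod_set.
by congr row_mx; rewrite big1 // => j _; rewrite scale0r.
Qed.

Lemma inCone_prod_r t1 t2 x :
  inCone u2 t2 x -> inCone u (prod_set t1 t2) (row_mx 0 x).
Proof.
move=> [a [a0 ->]]; exists (fun i => if i is inr j then a j else 0).
split=> [[]|] //; rewrite prod_u_combination preim_inl_prod_set preim_inr_prod_set.
by congr row_mx; rewrite big1 // => j _; rewrite scale0r.
Qed.

Lemma prod_u_inj : injective u1 -> injective u2 -> (forall i, u1 i != 0) ->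
  injective u.
Proof.
move=> inj1 inj2 nz1 [a|a] [b|b] /eq_row_mx [e1 e2].
- by rewrite (inj1 _ _ e1).
- by move: (nz1 a); rewrite e1 eqxx.
- by move: (nz1 b); rewrite -e1 eqxx.
- by rewrite (inj2 _ _ e2).
Qed.

Lemma prod_C_faces :
  (forall s t : {set I1}, s \in C1 -> t \subset s -> t \in C1) ->
  (forall s t : {set I2}, s \in C2 -> t \subset s -> t \in C2) ->
  forall s t : {set I1 + I2}, s \in C -> t \subset s -> t \in C.
Proof.
move=> faces1 faces2 s t; rewrite !inE => /andP[s1 s2] ts.
by rewrite (faces1 _ _ s1) ?(faces2 _ _ s2) ?preimsetS.
Qed.

Lemma prod_C_meet :
  (forall s t : {set I1}, s \in C1 -> t \in C1 -> forall x,
     inCone u1 s x -> inCone u1 t x -> inCone u1 (s :&: t) x) ->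
  (forall s t : {set I2}, s \in C2 -> t \in C2 -> forall x,
     inCone u2 s x -> inCone u2 t x -> inCone u2 (s :&: t) x) ->
  forall s t : {set I1 + I2}, s \in C -> t \in C -> forall x,
     inCone u s x -> inCone u t x -> inCone u (s :&: t) x.
Proof.
move=> meet1 meet2 s t; rewrite !inE => /andP[s1 s2] /andP[t1 t2] x.
move=> [a [a0 ea]] [b [b0 eb]].
rewrite prod_u_combination in ea; rewrite prod_u_combination in eb.
have [el er] := eq_row_mx (etrans (esym ea) eb).
have [c1 [c10 ec1]] := meet1 _ _ s1 t1 _
  (ex_intro _ _ (conj (fun j => a0 (inl j)) (erefl _)))
  (ex_intro _ _ (conj (fun j => b0 (inl j)) el)).
have [c2 [c20 ec2]] := meet2 _ _ s2 t2 _
  (ex_intro _ _ (conj (fun j => a0 (inr j)) (erefl _)))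
  (ex_intro _ _ (conj (fun j => b0 (inr j)) er)).
exists (fun i => match i with inl j => c1 j | inr j => c2 j end).
by split=> [[]|] //; rewrite prod_u_combination !preimsetI -ec1 -ec2 ea.
Qed.

Lemma prod_C_basis :
  (forall s : {set I1}, s \in C1 -> extends_to_basis u1 s) ->
  (forall s : {set I2}, s \in C2 -> extends_to_basis u2 s) ->
  forall s : {set I1 + I2}, s \in C -> extends_to_basis u s.
Proof.
move=> bases1 bases2 s; rewrite inE => /andP[s1 s2].
have [B1 [B1u HB1]] := bases1 _ s1; have [B2 [B2u HB2]] := bases2 _ s2.
exists (block_mx B1 0 0 B2); split.
  by rewrite unitmxE det_ublock unitrM -!unitmxE B1u B2u.
case=> j js.
  have /HB1[k Hk] : j \in inl @^-1: s by rewrite inE.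
  by exists (lshift n2 k); rewrite /block_mx rowKu row_row_mx Hk row0.
have /HB2[k Hk] : j \in inr @^-1: s by rewrite inE.
by exists (rshift n1 k); rewrite /block_mx rowKd row_row_mx Hk row0.
Qed.

Lemma prod_unimodular : UnimodularFan u1 C1 -> UnimodularFan u2 C2 ->
  UnimodularFan u C.
Proof.
move=> F1 F2; have nz1 i := unimodular_ray_neq0 i F1.
case: F1 F2 => [C10 [rays1 inj1] faces1 meet1 bases1]
  [C20 [rays2 inj2] faces2 meet2 bases2].
split; first by rewrite -prod_set0 prod_set_prod_C C10 C20.
- split; last exact: prod_u_inj.
  by case=> r; rewrite (prod_set1l, prod_set1r) prod_set_prod_C ?rays1 ?rays2 ?C10 ?C20.
- exact: prod_C_faces.
- exact: prod_C_meet.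
- exact: prod_C_basis.
Qed.

End ProductFan.

Definition restr_l n1 n2 (f : 'rV[RR]_(n1 + n2) -> RR) (x : 'rV[RR]_n1) : RR :=
  f (row_mx x 0).

Definition restr_r n1 n2 (f : 'rV[RR]_(n1 + n2) -> RR) (x : 'rV[RR]_n2) : RR :=
  f (row_mx 0 x).

Definition prod_chi n1 n2 (chi1 : ('rV[RR]_n1 -> RR) -> int)
    (chi2 : ('rV[RR]_n2 -> RR) -> int) (f : 'rV[RR]_(n1 + n2) -> RR) : int :=
  chi1 (restr_l f) * chi2 (restr_r f).

Section EhrhartClauses.
Variables (n : nat) (I : finType) (u : I -> 'rV[int]_n) (C : {set {set I}}).

Definition class_fun (s : {set I}) (chi : ('rV[RR]_n -> RR) -> int) : Prop :=
  forall f g, PLstar u C s f -> PLstar u C s g -> eqPLbar u C s f g ->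
    chi f = chi g.

Definition ehrhart_recursion (s : {set I}) (rho : I)
    (chi chi_rho : ('rV[RR]_n -> RR) -> int) : Prop :=
  forall f delta m, PLstar u C s f -> Courant u C s rho delta ->
    vanishes_on u s m -> (forall x, inCone u (rho |: s) x -> f x = evalM m x) ->
    chi f = chi (fun x => f x - delta x) + chi_rho (fun x => f x - evalM m x).

End EhrhartClauses.

Section Restriction.
Variables (n1 n2 : nat) (I1 I2 : finType)
  (u1 : I1 -> 'rV[int]_n1) (C1 : {set {set I1}})
  (u2 : I2 -> 'rV[int]_n2) (C2 : {set {set I2}}).
Hypothesis faces1 : forall s t : {set I1}, s \in C1 -> t \subset s -> t \in C1.
Hypothesis faces2 : forall s t : {set I2}, s \in C2 -> t \subset s -> t \in C2.

Local Notation u := (prod_u u1 u2).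
Local Notation C := (prod_C C1 C2).
Implicit Type m : 'rV[int]_(n1 + n2).

Lemma vanishes_on_lsubmx s1 s2 m :
  vanishes_on u (prod_set s1 s2) m -> vanishes_on u1 s1 (lsubmx m).
Proof.
by move=> v i i1; rewrite -pairM_row_mx0; apply: (v (inl i)); rewrite prod_set_inl.
Qed.

Lemma vanishes_on_rsubmx s1 s2 m :
  vanishes_on u (prod_set s1 s2) m -> vanishes_on u2 s2 (rsubmx m).
Proof.
by move=> v i i2; rewrite -pairM_row_0mx; apply: (v (inr i)); rewrite prod_set_inr.
Qed.

Lemma PLstar_restr_l s1 s2 f : s2 \in C2 ->
  PLstar u C (prod_set s1 s2) f -> PLstar u1 C1 s1 (restr_l f).
Proof.
move=> s2C Hf t1 t1C st1.
have [|m [v e]] := Hf _ _ (prod_setS st1 (subxx s2)).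
  by rewrite prod_set_prod_C t1C s2C.
exists (lsubmx m); split; first exact: vanishes_on_lsubmx v.
by move=> x cx; rewrite -evalM_row_mx0; apply/e/inCone_prod_l.
Qed.

Lemma PLstar_restr_r s1 s2 f : s1 \in C1 ->
  PLstar u C (prod_set s1 s2) f -> PLstar u2 C2 s2 (restr_r f).
Proof.
move=> s1C Hf t2 t2C st2.
have [|m [v e]] := Hf _ _ (prod_setS (subxx s1) st2).
  by rewrite prod_set_prod_C t2C s1C.
exists (rsubmx m); split; first exact: vanishes_on_rsubmx v.
by move=> x cx; rewrite -evalM_row_0mx; apply/e/inCone_prod_r.
Qed.

Lemma eqPLbar_restr_l s1 s2 f g : s2 \in C2 ->
  eqPLbar u C (prod_set s1 s2) f g -> eqPLbar u1 C1 s1 (restr_l f) (restr_l g).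
Proof.
move=> s2C [m [v e]]; exists (lsubmx m); split; first exact: vanishes_on_lsubmx v.
move=> t1 t1C st1 x cx; rewrite -evalM_row_mx0; apply: (e (prod_set t1 s2)).
- by rewrite prod_set_prod_C t1C s2C.
- exact: prod_setS.
- exact: inCone_prod_l.
Qed.

Lemma eqPLbar_restr_r s1 s2 f g : s1 \in C1 ->
  eqPLbar u C (prod_set s1 s2) f g -> eqPLbar u2 C2 s2 (restr_r f) (restr_r g).
Proof.
move=> s1C [m [v e]]; exists (rsubmx m); split; first exact: vanishes_on_rsubmx v.
move=> t2 t2C st2 x cx; rewrite -evalM_row_0mx; apply: (e (prod_set s1 t2)).
- by rewrite prod_set_prod_C t2C s1C.
- exact: prod_setS.
- exact: inCone_prod_r.
Qed.

Lemma starRay_prod_inl s1 s2 r : s2 \in C2 ->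
  starRay C (prod_set s1 s2) (inl r) = starRay C1 s1 r.
Proof.
by move=> s2C; rewrite /starRay prod_set_inl setU1_prod_set_inl prod_set_prod_C s2C andbT.
Qed.

Lemma starRay_prod_inr s1 s2 r : s1 \in C1 ->
  starRay C (prod_set s1 s2) (inr r) = starRay C2 s2 r.
Proof.
by move=> s1C; rewrite /starRay prod_set_inr setU1_prod_set_inr prod_set_prod_C s1C.
Qed.

Lemma Courant_restr_l s1 s2 r d : s2 \in C2 ->
  Courant u C (prod_set s1 s2) (inl r) d -> Courant u1 C1 s1 r (restr_l d).
Proof.
move=> s2C [Hd d1 d0]; split; first exact: PLstar_restr_l Hd.
  by rewrite /restr_l -(toR0 n2) -toR_row_mx.
move=> r' ray' r'r; rewrite /restr_l -(toR0 n2) -toR_row_mx.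
by apply: (d0 (inl r')); rewrite ?starRay_prod_inl // inj_eq.
Qed.

Lemma Courant_restr_r s1 s2 r d : s1 \in C1 ->
  Courant u C (prod_set s1 s2) (inr r) d -> Courant u2 C2 s2 r (restr_r d).
Proof.
move=> s1C [Hd d1 d0]; split; first exact: PLstar_restr_r Hd.
  by rewrite /restr_r -(toR0 n1) -toR_row_mx.
move=> r' ray' r'r; rewrite /restr_r -(toR0 n1) -toR_row_mx.
by apply: (d0 (inr r')); rewrite ?starRay_prod_inr // inj_eq.
Qed.

(* On a cone t2 of the second star, d is linear with slope vanishing on s2, and
   the remaining generators of t2 are rays of the product star other than inl r. *)
Lemma Courant_inl_vanish_r s1 s2 r d : s1 \in C1 -> s2 \in C2 ->
  Courant u C (prod_set s1 s2) (inl r) d ->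
  forall t2, t2 \in C2 -> s2 \subset t2 -> forall x, inCone u2 t2 x ->
  restr_r d x = 0.
Proof.
move=> s1C s2C [Hd _ d0] t2 t2C st2 x cx.
have tC : prod_set s1 t2 \in C by rewrite prod_set_prod_C t2C s1C.
have [m [v e]] := Hd _ tC (prod_setS (subxx s1) st2).
rewrite /restr_r e; last exact: inCone_prod_r.
case: cx => a [_ ->]; rewrite evalM_row_0mx evalM_sum big1 // => i it.
have [is2|is2] := boolP (i \in s2).
  by rewrite evalM_toR -pairM_row_0mx (v (inr i)) ?mulr0 ?prod_set_inr.
rewrite -evalM_row_0mx -e; last exact/inCone_prod_r/inCone_gen.
rewrite -(toR0 n1) -toR_row_mx (d0 (inr i)) ?mulr0 // starRay_prod_inr //.
by rewrite /starRay is2 (faces2 t2C) // subUset sub1set it.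
Qed.

Lemma Courant_inr_vanish_l s1 s2 r d : s1 \in C1 -> s2 \in C2 ->
  Courant u C (prod_set s1 s2) (inr r) d ->
  forall t1, t1 \in C1 -> s1 \subset t1 -> forall x, inCone u1 t1 x ->
  restr_l d x = 0.
Proof.
move=> s1C s2C [Hd _ d0] t1 t1C st1 x cx.
have tC : prod_set t1 s2 \in C by rewrite prod_set_prod_C t1C s2C.
have [m [v e]] := Hd _ tC (prod_setS st1 (subxx s2)).
rewrite /restr_l e; last exact: inCone_prod_l.
case: cx => a [_ ->]; rewrite evalM_row_mx0 evalM_sum big1 // => i it.
have [is1|is1] := boolP (i \in s1).
  by rewrite evalM_toR -pairM_row_mx0 (v (inl i)) ?mulr0 ?prod_set_inl.
rewrite -evalM_row_mx0 -e; last exact/inCone_prod_l/inCone_gen.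
rewrite -(toR0 n2) -toR_row_mx (d0 (inl i)) ?mulr0 // starRay_prod_inl //.
by rewrite /starRay is1 (faces1 t1C) // subUset sub1set it.
Qed.

Lemma prod_chi_class_fun s1 s2 chi1 chi2 : s1 \in C1 -> s2 \in C2 ->
  class_fun u1 C1 s1 chi1 -> class_fun u2 C2 s2 chi2 ->
  class_fun u C (prod_set s1 s2) (prod_chi chi1 chi2).
Proof.
move=> s1C s2C cf1 cf2 f g Hf Hg fg; rewrite /prod_chi.
rewrite (cf1 _ _ (PLstar_restr_l s2C Hf) (PLstar_restr_l s2C Hg)
  (eqPLbar_restr_l s2C fg)).
by rewrite (cf2 _ _ (PLstar_restr_r s1C Hf) (PLstar_restr_r s1C Hg)
  (eqPLbar_restr_r s1C fg)).
Qed.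

(* The chi2 factor is the same in all three terms: d vanishes on the second
   factor and m restricts there to a linear function. *)
Lemma prod_chi_recursion_inl s1 s2 r chi1 chi1r chi2 : s1 \in C1 -> s2 \in C2 ->
  class_fun u2 C2 s2 chi2 ->
  ehrhart_recursion u1 C1 s1 r chi1 chi1r ->
  ehrhart_recursion u C (prod_set s1 s2) (inl r)
    (prod_chi chi1 chi2) (prod_chi chi1r chi2).
Proof.
move=> s1C s2C cf2 rec1 f d m Hf Hd Hv He; rewrite /prod_chi.
have [Hd_PL _ _] := Hd.
have fd : chi2 (restr_r f) = chi2 (restr_r (fun x => f x - d x)).
  apply: cf2; first exact: PLstar_restr_r s1C Hf.
    exact: PLstar_restr_r s1C (PLstarB Hf Hd_PL).
  exists 0; split=> [i _|t2 t2C st2 x cx]; first exact: pairM0.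
  rewrite evalM0 /restr_r opprB addrC subrK.
  exact: (Courant_inl_vanish_r s1C s2C Hd t2C st2 cx).
have fm : chi2 (restr_r f) = chi2 (restr_r (fun x => f x - evalM m x)).
  apply: cf2; first exact: PLstar_restr_r s1C Hf.
    exact/(PLstar_restr_r s1C)/(PLstarB Hf)/PLstar_evalM.
  exists (rsubmx m); split=> [|t2 t2C st2 x cx]; first exact: vanishes_on_rsubmx Hv.
  by rewrite /restr_r opprB addrC subrK evalM_row_0mx.
have -> : restr_l (fun x => f x - evalM m x) =
          (fun x => restr_l f x - evalM (lsubmx m) x).
  by apply: functional_extensionality => x; rewrite /restr_l evalM_row_mx0.
rewrite -fd -fm -mulrDl; congr (_ * _).
apply: (rec1 _ _ _ (PLstar_restr_l s2C Hf) (Courant_restr_l s2C Hd)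
  (vanishes_on_lsubmx Hv)).
move=> x cx; rewrite /restr_l -evalM_row_mx0; apply: He.
by rewrite setU1_prod_set_inl; apply: inCone_prod_l.
Qed.

Lemma prod_chi_recursion_inr s1 s2 r chi1 chi2 chi2r : s1 \in C1 -> s2 \in C2 ->
  class_fun u1 C1 s1 chi1 ->
  ehrhart_recursion u2 C2 s2 r chi2 chi2r ->
  ehrhart_recursion u C (prod_set s1 s2) (inr r)
    (prod_chi chi1 chi2) (prod_chi chi1 chi2r).
Proof.
move=> s1C s2C cf1 rec2 f d m Hf Hd Hv He; rewrite /prod_chi.
have [Hd_PL _ _] := Hd.
have fd : chi1 (restr_l f) = chi1 (restr_l (fun x => f x - d x)).
  apply: cf1; first exact: PLstar_restr_l s2C Hf.
    exact: PLstar_restr_l s2C (PLstarB Hf Hd_PL).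
  exists 0; split=> [i _|t1 t1C st1 x cx]; first exact: pairM0.
  rewrite evalM0 /restr_l opprB addrC subrK.
  exact: (Courant_inr_vanish_l s1C s2C Hd t1C st1 cx).
have fm : chi1 (restr_l f) = chi1 (restr_l (fun x => f x - evalM m x)).
  apply: cf1; first exact: PLstar_restr_l s2C Hf.
    exact/(PLstar_restr_l s2C)/(PLstarB Hf)/PLstar_evalM.
  exists (lsubmx m); split=> [|t1 t1C st1 x cx]; first exact: vanishes_on_lsubmx Hv.
  by rewrite /restr_l opprB addrC subrK evalM_row_mx0.
have -> : restr_r (fun x => f x - evalM m x) =
          (fun x => restr_r f x - evalM (rsubmx m) x).
  by apply: functional_extensionality => x; rewrite /restr_r evalM_row_0mx.
rewrite -fd -fm -mulrDr; congr (_ * _).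
apply: (rec2 _ _ _ (PLstar_restr_r s1C Hf) (Courant_restr_r s1C Hd)
  (vanishes_on_rsubmx Hv)).
move=> x cx; rewrite /restr_r -evalM_row_0mx; apply: He.
by rewrite setU1_prod_set_inr; apply: inCone_prod_r.
Qed.

Lemma prod_EhrPoly s1 chi1 : EhrPoly u1 C1 s1 chi1 -> s1 \in C1 ->
  forall s2 chi2, EhrPoly u2 C2 s2 chi2 -> s2 \in C2 ->
  EhrPoly u C (prod_set s1 s2) (prod_chi chi1 chi2).
Proof.
elim=> {}s1 {}chi1 chis1 _ IH1 cf1 z1 rec1 s1C s2 chi2.
elim=> {}s2 {}chi2 chis2 rays2 IH2 cf2 z2 rec2 s2C.
have E2 : EhrPoly u2 C2 s2 chi2 by exact: EhrPolyI rays2 cf2 z2 rec2.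
apply: (@EhrPolyI _ _ _ _ _ _ (fun rho => match rho with
  | inl r => prod_chi (chis1 r) chi2 | inr r => prod_chi chi1 (chis2 r) end)).
- case=> r; rewrite (starRay_prod_inl, starRay_prod_inr) // => ray;
    have /andP[_ rsC] := ray.
    by rewrite setU1_prod_set_inl; apply: IH1.
  by rewrite setU1_prod_set_inr; apply: IH2.
- exact: prod_chi_class_fun.
- by rewrite /prod_chi z1 z2 mulr1.
- move=> f [r|r] d m Hf; rewrite (starRay_prod_inl, starRay_prod_inr) // => ray.
    by apply: prod_chi_recursion_inl => // g dg mg Hg; apply: rec1 Hg ray.
  by apply: prod_chi_recursion_inr => // g dg mg Hg; apply: rec2 Hg ray.
Qed.

End Restriction.

Lemma prod_chi_prod_fun n1 n2 (I1 I2 : finType)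
    (u1 : I1 -> 'rV[int]_n1) (C1 : {set {set I1}})
    (u2 : I2 -> 'rV[int]_n2) (C2 : {set {set I2}}) chi1 chi2 f1 f2 :
  set0 \in C1 -> set0 \in C2 -> PL u1 C1 f1 -> PL u2 C2 f2 ->
  prod_chi chi1 chi2 (prod_fun f1 f2) = chi1 f1 * chi2 f2.
Proof.
move=> C10 C20 Hf1 Hf2; rewrite /prod_chi; congr (chi1 _ * chi2 _);
  apply: functional_extensionality => x.
  by rewrite /restr_l /prod_fun row_mxKl row_mxKr (PL_eval0 C20 Hf2) addr0.
by rewrite /restr_r /prod_fun row_mxKl row_mxKr (PL_eval0 C10 Hf1) add0r.
Qed.

Theorem proposition5 (n1 n2 : nat) (I1 I2 : finType)
  (u1 : I1 -> 'rV[int]_n1) (C1 : {set {set I1}})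
  (u2 : I2 -> 'rV[int]_n2) (C2 : {set {set I2}})
  (chi1 : ('rV[RR]_n1 -> RR) -> int) (chi2 : ('rV[RR]_n2 -> RR) -> int) :
  IsEhrhartPolynomial u1 C1 chi1 ->
  IsEhrhartPolynomial u2 C2 chi2 ->
  exists chi : ('rV[RR]_(n1 + n2) -> RR) -> int,
    IsEhrhartPolynomial (prod_u u1 u2) (prod_C C1 C2) chi /\
    forall f1 f2, PL u1 C1 f1 -> PL u2 C2 f2 ->
      chi (prod_fun f1 f2) = chi1 f1 * chi2 f2.
Proof.
move=> [F1 E1] [F2 E2]; exists (prod_chi chi1 chi2).
have [C10 _ faces1 _ _] := F1; have [C20 _ faces2 _ _] := F2.
split; first split.
- exact: prod_unimodular.
- by rewrite -prod_set0; apply: prod_EhrPoly.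
- by move=> f1 f2; apply: prod_chi_prod_fun.
Qed.
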